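(* rATL is strictly more expressive than rCTL, in the following sense: (i) for every rCTL formula $\varphi$ there is an rATL formula $\varphi^\star$ such that $V(s,\varphi^\star)=V_{rCTL}(s,\varphi)$ for every Kripke structure $\mathcal{K}$ and every state $s$ of $\mathcal{K}$ (with $\varphi^\star$ evaluated in $\mathcal{S}_\mathcal{K}$); and (ii) there exists an rATL formula $\psi$ such that for no rCTL formula $\chi$ it holds that $V(s,\psi)=V_{rCTL}(s,\chi)$ for every concurrent game structure $\mathcal{S}$ and every state $s$ of $\mathcal{S}$, where $V_{rCTL}$ on a concurrent game structure is evaluated in its underlying Kripke structure.
   Context: Fix a finite set $\mathrm{AP}$ of atomic propositions. A concurrent game structure (CGS) is a tuple $\mathcal{S}=(St,Ag,Ac,\delta,\ell)$ where $St$ is a finite set of states, $Ag$ a finite set of agents, $Ac$ a finite set of actions, $\ell:St\to 2^{\mathrm{AP}}$ a labeling, and $\delta:St\times AV\to St$ a transition function, where $AV$ is the set of action vectors for $Ag$ (an action vector for $A\subseteq Ag$ is a map $A\to Ac$). A state $s'$ is a successor of $s$ if $s'=\delta(s,v)$ for some $v\in AV$. A path is an infinite sequence $\pi=s_0s_1s_2\cdots$ of states with $s_{n+1}$ a successor of $s_n$ for all $n$; write $\pi[n]=s_n$. A strategy for an agent is a function $f:St^+\to Ac$. For $A\subseteq Ag$ and a set $F_A=\{f_a\mid a\in A\}$ of strategies, one for each agent in $A$, $out(s,F_A)$ is the set of paths $s_0s_1\cdots$ with $s_0=s$ such that for every $n\ge 0$ there is $v\in AV$ with $v(a)=f_a(s_0\cdots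 s_n)$ for all $a\in A$ and $s_{n+1}=\delta(s_n,v)$. $\mathbb{B}_4=\{1111,0111,0011,0001,0000\}$ is totally ordered by $1111\succ0111\succ0011\succ0001\succ0000$; for $b=b_1b_2b_3b_4\in\mathbb{B}_4$ and $k\in\{1,2,3,4\}$, $b[k]=b_k$; max and min on $\mathbb{B}_4$ refer to this order, and on bits to $0<1$. rATL formulas: state formulas $\varphi ::= p \mid \neg\varphi\mid\varphi\vee\varphi\mid\varphi\wedge\varphi\mid\varphi\to\varphi\mid\langle\!\langle A\rangle\!\rangle\Phi\mid[\![A]\!]\Phi$ and path formulas $\Phi::=\dot{\bigcirc}\varphi\mid\dot\Diamond\varphi\mid\dot\Box\varphi$, with $p\in\mathrm{AP}$ and $A$ a set of agents; an rATL formula is a state formula. On a CGS the valuation $V$ maps (state, state formula) and (path, path formula) pairs to $\mathbb{B}_4$: $V(s,p)=1111$ if $p\in\ell(s)$ and $0000$ otherwise; $V(s,\varphi_1\vee\varphi_2)=\max(V(s,\varphi_1),V(s,\varphi_2))$; $V(s,\varphi_1\wedge\varphi_2)=\min(V(s,\varphi_1),V(s,\varphi_2))$; $V(s,\neg\varphi)=0000$ if $V(s,\varphi)=1111$ and $1111$ otherwise; $V(s,\varphi_1\to\varphi_2)=1111$ if $V(s,\varphi_1)\preceq V(s,\varphi_2)$ and $V(s,\varphi_2)$ otherwise; $V(s,\langle\!\langle A\rangle\!\rangle\Phi)$ is the maximal $b\in\mathbb{B}_4$ such that there is a set $F_A$ of strategies (one per agent in $A$) with $V(\pi,\Phi)\succeq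 b$ for all $\pi\in out(s,F_A)$; $V(s,[\![A]\!]\Phi)$ is the maximal $b\in\mathbb{B}_4$ such that for every such $F_A$ there is $\pi\in out(s,F_A)$ with $V(\pi,\Phi)\succeq b$. For paths: $V(\pi,\dot\bigcirc\varphi)[k]=V(\pi[1],\varphi)[k]$; $V(\pi,\dot\Diamond\varphi)[k]=\max_{i\ge0}V(\pi[i],\varphi)[k]$; $V(\pi,\dot\Box\varphi)=b_1b_2b_3b_4$ with $b_1=\min_{i\ge0}V(\pi[i],\varphi)[1]$, $b_2=\max_{i\ge0}\min_{j\ge i}V(\pi[j],\varphi)[2]$, $b_3=\min_{i\ge0}\max_{j\ge i}V(\pi[j],\varphi)[3]$, $b_4=\max_{i\ge0}V(\pi[i],\varphi)[4]$. A Kripke structure is $\mathcal{K}=(S,I,R,L)$ with finite state set $S$, initial states $I\subseteq S$, transition relation $R\subseteq S\times S$ such that every state has an $R$-successor, and labeling $L:S\to2^{\mathrm{AP}}$; a path is an infinite sequence $s_0s_1\cdots$ with $(s_i,s_{i+1})\in R$; $\mathit{paths}(s)$ is the set of paths starting in $s$. rCTL formulas: state formulas $\varphi::=p\mid\neg\varphi\mid\varphi\vee\varphi\mid\varphi\wedge\varphi\mid\varphi\to\varphi\mid\exists\Phi\mid\forall\Phi$, path formulas $\Phi::=\dot\bigcirc\varphi\mid\dot\Diamond\varphi\mid\dot\Box\varphi$. The valuation $V_{rCTL}$ is defined exactly as $V$ above for atomic propositions, Boolean connectives and $\dot\bigcirc,\dot\Diamond,\dot\Box$ (with $L$ in place of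 $\ell$), and $V_{rCTL}(s,\exists\Phi)=\max_{\pi\in\mathit{paths}(s)}V_{rCTL}(\pi,\Phi)$, $V_{rCTL}(s,\forall\Phi)=\min_{\pi\in\mathit{paths}(s)}V_{rCTL}(\pi,\Phi)$. The underlying Kripke structure of a CGS $\mathcal{S}$ has the same states and labeling, with $R=\{(s,s')\mid s'\text{ is a successor of }s\}$. The CGS associated with $\mathcal{K}$ is $\mathcal{S}_\mathcal{K}=(S,\{a\},S,\delta,L)$ with a single agent $a$, actions $S$, and $\delta(s,s')=s'$ if $(s,s')\in R$, and $\delta(s,s')=s''$ for some fixed $s''$ with $(s,s'')\in R$ otherwise (action vectors for $\{a\}$ are identified with actions). *)

From Stdlib Require Import ClassicalEpsilon.
From mathcomp Require Import all_boot.

Set Implicit Arguments.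
Unset Strict Implicit.
Unset Printing Implicit Defensive.

Inductive B4 := b1111 | b0111 | b0011 | b0001 | b0000.

Definition b4_rank (b : B4) : nat :=
  match b with b1111 => 4 | b0111 => 3 | b0011 => 2 | b0001 => 1 | b0000 => 0 end.

Definition b4_le (b c : B4) : bool := b4_rank b <= b4_rank c.
Definition b4_max (b c : B4) : B4 := if b4_le b c then c else b.
Definition b4_min (b c : B4) : B4 := if b4_le b c then b else c.

Definition b4_is_top (b : B4) : bool := if b is b1111 then true else false.

(* b[k] for k in {1,2,3,4} *)
Definition bit (b : B4) (k : nat) : bool :=
  match b with
  | b1111 => true
  | b0111 => 2 <= k
  | b0011 => 3 <= k
  | b0001 => 4 <= k
  | b0000 => false
  end.

(* The element b1 b2 b3 b4 of B_4 given by its four bits (only applied to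
   monotone bit vectors, for which it is the inverse of [bit]). *)
Definition of_bits (x1 x2 x3 x4 : bool) : B4 :=
  if x1 then b1111 else if x2 then b0111 else if x3 then b0011
  else if x4 then b0001 else b0000.

Definition pb (P : Prop) : bool :=
  if excluded_middle_informative P then true else false.

Definition max_sat (P : B4 -> Prop) : B4 :=
  if pb (P b1111) then b1111 else if pb (P b0111) then b0111
  else if pb (P b0011) then b0011 else if pb (P b0001) then b0001 else b0000.

Definition sup_bit (g : nat -> B4) (k : nat) : bool := pb (exists i, bit (g i) k).
Definition inf_bit (g : nat -> B4) (k : nat) : bool := pb (forall i, bit (g i) k).
Definition liminf_bit (g : nat -> B4) (k : nat) : bool :=
  pb (exists i, forall j, i <= j -> bit (g j) k).
Definition limsup_bit (g : nat -> B4) (k : nat) : bool :=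
  pb (forall i, exists j, i <= j /\ bit (g j) k).

(* valuation of "eventually" and "always" along the sequence g i = V(pi[i], phi) *)
Definition ev_val (g : nat -> B4) : B4 :=
  of_bits (sup_bit g 1) (sup_bit g 2) (sup_bit g 3) (sup_bit g 4).
Definition alw_val (g : nat -> B4) : B4 :=
  of_bits (inf_bit g 1) (liminf_bit g 2) (limsup_bit g 3) (sup_bit g 4).

Inductive pathF (F : Type) : Type :=
| PNext of F
| PEv of F
| PAlw of F.

Inductive rATL (AP : Type) (Agt : finType) : Type :=
| AProp of AP
| ANeg of rATL AP Agt
| AOr of rATL AP Agt & rATL AP Agt
| AAnd of rATL AP Agt & rATL AP Agt
| AImp of rATL AP Agt & rATL AP Agt
| ACoal of {set Agt} & pathF (rATL AP Agt)
| ADual of {set Agt} & pathF (rATL AP Agt).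

Inductive rCTL (AP : Type) : Type :=
| CProp of AP
| CNeg of rCTL AP
| COr of rCTL AP & rCTL AP
| CAnd of rCTL AP & rCTL AP
| CImp of rCTL AP & rCTL AP
| CEx of pathF (rCTL AP)
| CAll of pathF (rCTL AP).

Record CGS (AP : finType) (Agt : finType) := {
  St : finType;
  Ac : finType;
  delta : St -> {ffun Agt -> Ac} -> St;
  lab : St -> {set AP}
}.

Section CGSsem.
Variables (AP Agt : finType) (S : CGS AP Agt).

Definition successor (s s' : St S) : Prop := exists v, s' = delta s v.

(* strategies f : St^+ -> Ac (histories as non-empty sequences) *)
Definition strategy := seq (St S) -> Ac S.

Definition prefix (pi : nat -> St S) (n : nat) : seq (St S) :=
  [seq pi i | i <- iota 0 n.+1].

(* out(s, F_A): F assigns a strategy to each agent; only agents in A matter *)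
Definition out (A : {set Agt}) (F : Agt -> strategy) (s : St S)
    (pi : nat -> St S) : Prop :=
  pi 0 = s /\
  forall n, exists v : {ffun Agt -> Ac S},
    (forall a, a \in A -> v a = F a (prefix pi n)) /\ pi n.+1 = delta (pi n) v.

Fixpoint Vatl (s : St S) (phi : rATL AP Agt) {struct phi} : B4 :=
  match phi with
  | AProp p => if p \in lab s then b1111 else b0000
  | ANeg f => if b4_is_top (Vatl s f) then b0000 else b1111
  | AOr f g => b4_max (Vatl s f) (Vatl s g)
  | AAnd f g => b4_min (Vatl s f) (Vatl s g)
  | AImp f g => if b4_le (Vatl s f) (Vatl s g) then b1111 else Vatl s g
  | ACoal A Phi =>
      max_sat (fun b => exists F : Agt -> strategy, forall pi, out A F s pi ->
        b4_le b (match Phi with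
                 | PNext f => Vatl (pi 1) f
                 | PEv f => ev_val (fun i => Vatl (pi i) f)
                 | PAlw f => alw_val (fun i => Vatl (pi i) f)
                 end))
  | ADual A Phi =>
      max_sat (fun b => forall F : Agt -> strategy, exists pi, out A F s pi /\
        b4_le b (match Phi with
                 | PNext f => Vatl (pi 1) f
                 | PEv f => ev_val (fun i => Vatl (pi i) f)
                 | PAlw f => alw_val (fun i => Vatl (pi i) f)
                 end))
  end.

Definition cgs_rel : rel (St S) :=
  fun s s' => [exists v : {ffun Agt -> Ac S}, s' == delta s v].

Definition cgs_total : Prop := forall s : St S, exists s', successor s s'.

End CGSsem.

Section Ksem.
Variables (AP : finType) (T : finType) (R : rel T) (L : T -> {set AP}).

Definition kpath (s : T) (pi : nat -> T) : Prop :=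
  pi 0 = s /\ forall n, R (pi n) (pi n.+1).

Fixpoint Vctl (s : T) (phi : rCTL AP) {struct phi} : B4 :=
  match phi with
  | CProp p => if p \in L s then b1111 else b0000
  | CNeg f => if b4_is_top (Vctl s f) then b0000 else b1111
  | COr f g => b4_max (Vctl s f) (Vctl s g)
  | CAnd f g => b4_min (Vctl s f) (Vctl s g)
  | CImp f g => if b4_le (Vctl s f) (Vctl s g) then b1111 else Vctl s g
  | CEx Phi =>
      max_sat (fun b => exists pi, kpath s pi /\
        b4_le b (match Phi with
                 | PNext f => Vctl (pi 1) f
                 | PEv f => ev_val (fun i => Vctl (pi i) f)
                 | PAlw f => alw_val (fun i => Vctl (pi i) f)
                 end))
  | CAll Phi =>
      max_sat (fun b => forall pi, kpath s pi ->
        b4_le b (match Phi with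
                 | PNext f => Vctl (pi 1) f
                 | PEv f => ev_val (fun i => Vctl (pi i) f)
                 | PAlw f => alw_val (fun i => Vctl (pi i) f)
                 end))
  end.
End Ksem.

Record Kripke (AP : finType) := {
  KS : finType;
  KI : {set KS};
  KR : rel KS;
  KL : KS -> {set AP};
  KR_total : forall s, exists s', KR s s'
}.

Definition VK (AP : finType) (K : Kripke AP) (s : KS K) (phi : rCTL AP) : B4 :=
  Vctl (@KR _ K) (@KL _ K) s phi.

(* The CGS S_K associated with K: single agent (type unit), actions = states;
   d s is the fixed R-successor s'' of s used for non-successor actions. *)
Definition SK (AP : finType) (K : Kripke AP) (d : KS K -> KS K) : CGS AP unit :=
  {| St := KS K;
     Ac := KS K;
     delta := fun s (v : {ffun unit -> KS K}) =>
                if @KR _ K s (v tt) then v tt else d s;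
     lab := @KL _ K |}.

(* Translate every rCTL formula homomorphically, sending the
   path quantifier "exists" to [[{}]] and "forall" to <<{}>>.  In the CGS S_K
   built from a Kripke structure K, the outcomes of the empty coalition (for
   any strategy profile) are exactly the paths of K, so "some outcome" and
   "all outcomes" coincide with "some path" and "all paths", and the
   translation preserves valuations by induction on the formula.

   Take two agents and two states, labelled by p0 or not.
   In one game agent [true] chooses the next state, in the other agent
   [false] does; both games have the same underlying Kripke structure (the
   complete graph), so every rCTL formula takes the same value in both.  The
   rATL formula <<{true}>> (next p0) is 1111 in the first game and not 1111
   in the second, so no rCTL formula expresses it. *)
From Pilot Require Import Defs.
From Stdlib Require Import FunctionalExtensionality ClassicalEpsilon.
From mathcomp Require Import all_boot.

Set Implicit Arguments.
Unset Strict Implicit.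
Unset Printing Implicit Defensive.

Lemma pb_ext (P Q : Prop) : (P <-> Q) -> pb P = pb Q.
Proof.
rewrite /pb => PQ; case: excluded_middle_informative => HP;
  case: excluded_middle_informative => HQ //; exfalso; tauto.
Qed.

Lemma max_sat_ext (P Q : B4 -> Prop) :
  (forall b, P b <-> Q b) -> max_sat P = max_sat Q.
Proof. by move=> PQ; rewrite /max_sat !(pb_ext (PQ _)). Qed.

Lemma max_sat_top (P : B4 -> Prop) : P b1111 -> max_sat P = b1111.
Proof.
rewrite /max_sat /pb => Ptop.
by case: excluded_middle_informative.
Qed.

Lemma max_sat_not_top (P : B4 -> Prop) : ~ P b1111 -> max_sat P <> b1111.
Proof.
move=> Ntop; have top_false : pb (P b1111) = false.
  by rewrite /pb; case: excluded_middle_informative.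
rewrite /max_sat top_false.
by case: (pb _) => //; case: (pb _) => //; case: (pb _).
Qed.

(* Path formulas: functorial action on their state subformula, the
   subformula itself, and the valuation along a path [pi] for a given
   valuation [eval] of state formulas (this is the expression inlined in
   the semantics of both logics). *)
Definition pathF_map (F G : Type) (g : F -> G) (Phi : pathF F) : pathF G :=
  match Phi with
  | PNext f => PNext (g f)
  | PEv f => PEv (g f)
  | PAlw f => PAlw (g f)
  end.

Definition pathF_sub (F : Type) (Phi : pathF F) : F :=
  match Phi with PNext f | PEv f | PAlw f => f end.

Definition path_val (T F : Type) (eval : T -> F -> B4) (pi : nat -> T)
    (Phi : pathF F) : B4 :=
  match Phi with
  | PNext f => eval (pi 1) f
  | PEv f => ev_val (fun i => eval (pi i) f)
  | PAlw f => alw_val (fun i => eval (pi i) f)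
  end.

Lemma path_val_map (T F G : Type) (eval1 : T -> F -> B4) (eval2 : T -> G -> B4)
    (g : F -> G) (pi : nat -> T) (Phi : pathF F) :
  (forall t, eval2 t (g (pathF_sub Phi)) = eval1 t (pathF_sub Phi)) ->
  path_val eval2 pi (pathF_map g Phi) = path_val eval1 pi Phi.
Proof.
case: Phi => f /= E; rewrite ?E //;
  by congr (_ _); apply: functional_extensionality => i.
Qed.

Section Embedding.
Variable AP : finType.

Fixpoint tr (phi : rCTL AP) : rATL AP unit :=
  match phi with
  | CProp p => AProp unit p
  | CNeg f => ANeg (tr f)
  | COr f g => AOr (tr f) (tr g)
  | CAnd f g => AAnd (tr f) (tr g)
  | CImp f g => AImp (tr f) (tr g)
  | CEx Phi => ADual set0 (pathF_map tr Phi)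
  | CAll Phi => ACoal set0 (pathF_map tr Phi)
  end.

Variables (K : Kripke AP) (d : KS K -> KS K).
Hypothesis d_succ : forall s, @KR _ K s (d s).

Lemma out_empty_SK (F : unit -> strategy (SK d)) s pi :
  out (S := SK d) set0 F s pi <-> kpath (@KR _ K) s pi.
Proof.
split=> -[pi0 step]; split=> // n.
- case: (step n) => v [_ ->] /=.
  by case: ifP => // _; apply: d_succ.
- exists [ffun _ => pi n.+1]; split=> [a|]; first by rewrite in_set0.
  by rewrite /= ffunE step.
Qed.

Lemma dual_empty_SK (X Y : (nat -> KS K) -> B4) s :
  (forall pi, X pi = Y pi) ->
  max_sat (fun b => forall F : unit -> strategy (SK d), exists pi,
     out (S := SK d) set0 F s pi /\ b4_le b (X pi)) =
  max_sat (fun b => exists pi, kpath (@KR _ K) s pi /\ b4_le b (Y pi)).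
Proof.
move=> XY; apply: max_sat_ext => b; split.
- move=> /(_ (fun _ _ => s)) [pi [/out_empty_SK Hpi Hb]].
  by exists pi; rewrite -XY.
- move=> [pi [Hpi Hb]] F; exists pi; rewrite XY.
  by split=> //; apply/out_empty_SK.
Qed.

Lemma coal_empty_SK (X Y : (nat -> KS K) -> B4) s :
  (forall pi, X pi = Y pi) ->
  max_sat (fun b => exists F : unit -> strategy (SK d), forall pi,
     out (S := SK d) set0 F s pi -> b4_le b (X pi)) =
  max_sat (fun b => forall pi, kpath (@KR _ K) s pi -> b4_le b (Y pi)).
Proof.
move=> XY; apply: max_sat_ext => b; split.
- by move=> [F HF] pi Hpi; rewrite -XY; apply: HF; apply/out_empty_SK.
- move=> H; exists (fun _ _ => s) => pi /out_empty_SK Hpi.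
  by rewrite XY; apply: H.
Qed.

Fixpoint tr_correct (phi : rCTL AP) (s : KS K) {struct phi} :
  @Vatl _ _ (SK d) s (tr phi) = @VK _ K s phi.
Proof.
case: phi => [p|f|f g|f g|f g|Phi|Phi]; rewrite /VK /=; try by rewrite ?tr_correct.
- apply: dual_empty_SK => pi.
  by apply: (path_val_map (eval1 := Vctl _ _)) => t; apply: tr_correct.
- apply: coal_empty_SK => pi.
  by apply: (path_val_map (eval1 := Vctl _ _)) => t; apply: tr_correct.
Qed.

End Embedding.

Section Separation.
Variables (AP : finType) (p0 : AP).

Definition lab_p0 (b : bool) : {set AP} := if b then [set p0] else set0.

Definition G_ctrl (ctrl : bool) : CGS AP bool :=
  {| St := bool; Ac := bool;
     delta := fun _ (v : {ffun bool -> bool}) => v ctrl;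
     lab := lab_p0 |}.

Definition psi : rATL AP bool := ACoal [set true] (PNext (AProp bool p0)).

Lemma G_ctrl_total ctrl : cgs_total (G_ctrl ctrl).
Proof. by move=> s; exists s, [ffun _ => s]; rewrite /= ffunE. Qed.

(* Every state is a successor of every state, whoever is in control:
   both games have the same underlying Kripke structure. *)
Lemma G_ctrl_rel ctrl : @cgs_rel _ _ (G_ctrl ctrl) = (fun _ _ => true).
Proof.
apply: functional_extensionality => x; apply: functional_extensionality => y.
by apply/existsP; exists [ffun _ => y]; rewrite /= ffunE.
Qed.

Lemma psi_controlled : @Vatl _ _ (G_ctrl true) false psi = b1111.
Proof.
apply: max_sat_top; exists (fun _ _ => true) => pi [_ step].
by case: (step 0) => v [v_true ->] /=; rewrite v_true ?in_set1 ?eqxx.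
Qed.

(* When agent [false] controls the game, it can always stay in the
   unlabelled state, whatever agent [true] does. *)
Lemma psi_uncontrolled : @Vatl _ _ (G_ctrl false) false psi <> b1111.
Proof.
apply: max_sat_not_top => -[F HF].
have : b4_le b1111 (if p0 \in lab_p0 false then b1111 else b0000).
  apply: (HF (fun _ => false)); split=> // n.
  exists [ffun a => if a then F true (Defs.prefix (S := G_ctrl false) (fun _ => false) n)
                    else false].
  by split=> [[|]|]; rewrite /= ?ffunE ?in_set1.
by rewrite /lab_p0 in_set0.
Qed.

End Separation.

Theorem theorem4 (AP : finType) (p0 : AP) :
  (forall phi : rCTL AP, exists phistar : rATL AP unit,
     forall (K : Kripke AP) (d : KS K -> KS K), (forall s, @KR _ K s (d s)) ->
     forall s : KS K, @Vatl _ _ (SK d) s phistar = @VK _ K s phi)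
  /\
  (exists (Agt : finType) (psi : rATL AP Agt), forall chi : rCTL AP,
     ~ (forall S : CGS AP Agt, cgs_total S ->
          forall s : St S, @Vatl _ _ S s psi = @Vctl _ _ (@cgs_rel _ _ S) (@lab _ _ S) s chi)).
Proof.
split.
- by move=> phi; exists (tr phi) => K d d_succ s; apply: tr_correct.
- exists bool, (psi p0) => chi expresses.
  have E_true := expresses _ (@G_ctrl_total _ p0 true) false.
  have E_false := expresses _ (@G_ctrl_total _ p0 false) false.
  apply: (@psi_uncontrolled _ p0).
  by rewrite E_false G_ctrl_rel -(@psi_controlled _ p0) E_true G_ctrl_rel.
Qed.
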